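(* Let $S\subseteq M_n$ and $T\subseteq M_{n'}$ be noncommutative graphs. If $S\leq T$ (there is a cohomomorphism from $S$ to $T$), then $\mathcal{H}(S)\leq\mathcal{H}(T)$.
   Context: All scalars are complex; $M_{n'\times n}$ denotes complex $n'\times n$ matrices and $M_n=M_{n\times n}$. A noncommutative graph is a linear subspace $S\subseteq M_n$ that contains $I_n$ and is closed under conjugate transpose. We write $S\leq T$ if there exist $m$ and matrices $E_1,\dots,E_m\in M_{n'\times n}$ with $\sum_{i=1}^m E_i^\dagger E_i=I_n$ (Choi-Kraus operators of a quantum channel $M_n\to M_{n'}$) such that $E_i^\dagger BE_j\in S$ for every $B\in T$ and all $i,j\in[m]$. For a subspace $S\subseteq M_n$, $M_m(S)$ denotes the set of $m\times m$ block matrices with every block in $S$, viewed in $M_{mn}$. The Haemers bound is $\mathcal{H}(S)=\min\{\mathrm{rk}(B):\ m\in\mathbb{N},\ B\in M_m(S),\ \sum_{i=1}^m B_{i,i}=I_n\}$. *)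

From HB Require Import structures.
From mathcomp Require Import all_boot all_order all_algebra.
From mathcomp Require Import complex.
From mathcomp Require Import boolp reals.
Set Implicit Arguments. Unset Strict Implicit. Unset Printing Implicit Defensive.
Import Order.TTheory GRing.Theory Num.Theory.
Local Open Scope ring_scope.

Definition adjmx {C : numClosedFieldType} {p q : nat} (A : 'M[C]_(p, q)) : 'M[C]_(q, p) :=
  (map_mx Num.conj A)^T.

Definition ncgraph {C : numClosedFieldType} {n : nat} (S : {vspace 'M[C]_n}) : Prop :=
  (1%:M \in S) /\ (forall A, A \in S -> adjmx A \in S).

Definition nc_le {C : numClosedFieldType} {n n' : nat}
    (S : {vspace 'M[C]_n}) (T : {vspace 'M[C]_n'}) : Prop :=
  exists (m : nat) (E : 'I_m -> 'M[C]_(n', n)),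
    \sum_(i < m) adjmx (E i) *m E i = 1%:M /\
    forall B, B \in T -> forall i j : 'I_m, adjmx (E i) *m B *m E j \in S.

Definition haemers_feasible {C : numClosedFieldType} {n : nat}
    (S : {vspace 'M[C]_n}) (k : nat) : Prop :=
  exists (m : nat) (Bl : 'I_m -> 'I_m -> 'M[C]_n),
    (forall i j, Bl i j \in S) /\
    \sum_(i < m) Bl i i = 1%:M /\
    \rank (\mxblock_(i < m, j < m) Bl i j) = k.

(* Haemers bound: the minimum of the feasible ranks (0 if there is none,
   which never happens for a noncommutative graph: take m = 1, B = I). *)
Definition haemers {C : numClosedFieldType} {n : nat} (S : {vspace 'M[C]_n}) : nat :=
  match pselect (exists k, haemers_feasible S k) with
  | left ex => ex_minn (P := fun k => `[< haemers_feasible S k >])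
                 (let: ex_intro k hk := ex in ex_intro _ k (asboolT hk))
  | right _ => 0%N
  end.

From HB Require Import structures.
From mathcomp Require Import all_boot all_order all_algebra.
From mathcomp Require Import complex.
From mathcomp Require Import boolp reals.
Import Order.TTheory GRing.Theory Num.Theory.
Local Open Scope ring_scope.
Local Open Scope complex_scope.

(* Pull a Haemers witness B = (B_ik) for T back along the Kraus operators E_j:
   the blocks E_j^dagger B_ik E_l, indexed by pairs (i, j), lie in S, their
   diagonal blocks sum to sum_j E_j^dagger E_j = I, and the new block matrix is
   P B Q for block-selection matrices P and Q, so its rank is at most rk B.
   Hence every feasible rank for T bounds a feasible rank for S from above. *)

Section Compression.
Variables (F : fieldType) (K m p q r s : nat).
Variables (idx : 'I_K -> 'I_m) (L : 'I_K -> 'M[F]_(p, q)).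
Variables (B : 'I_m -> 'I_m -> 'M[F]_(q, r)) (R : 'I_K -> 'M[F]_(r, s)).

Lemma mxblock_sandwichE :
  \mxblock_(x < K, y < K) (L x *m B (idx x) (idx y) *m R y) =
  \mxblock_(x < K, b < m) (if b == idx x then L x else 0)
    *m \mxblock_(i < m, j < m) B i j
    *m \mxblock_(b < m, y < K) (if b == idx y then R y else 0).
Proof.
rewrite !mul_mxblock; apply/eq_mxblock => x y.
under eq_bigr => c _.
  under eq_bigr => b _ do rewrite (fun_if (mulmx^~ _)) mul0mx.
  rewrite -big_mkcond big_pred1_eq (fun_if (mulmx _)) mulmx0.
  over.
by rewrite -big_mkcond big_pred1_eq.
Qed.

Lemma rank_mxblock_sandwich :
  (\rank (\mxblock_(x < K, y < K) (L x *m B (idx x) (idx y) *m R y))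
     <= \rank (\mxblock_(i < m, j < m) B i j))%N.
Proof.
by rewrite mxblock_sandwichE (leq_trans (mxrankM_maxl _ _)) // mxrankM_maxr.
Qed.

End Compression.

Section HaemersBound.
Context {C : numClosedFieldType}.

Lemma haemers_min {n} {S : {vspace 'M[C]_n}} {k} :
  haemers_feasible S k -> (haemers S <= k)%N.
Proof.
move=> feas_k; rewrite /haemers; case: pselect => [ex|]; last by case; exists k.
by case: ex_minnP => j _; apply; apply/asboolP.
Qed.

Lemma haemers_feasible_haemers {n} {S : {vspace 'M[C]_n}} :
  1%:M \in S -> haemers_feasible S (haemers S).
Proof.
move=> S1; rewrite /haemers; case: pselect => [ex|]; first by case: ex_minnP => j /asboolP.
case; exists (\rank (\mxblock_(i < 1, j < 1) (1%:M : 'M[C]_n))), 1%N, (fun _ _ => 1%:M).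
by rewrite big_ord1.
Qed.

Section Pullback.
Context {n n' m m' : nat}.
Variables (E : 'I_m' -> 'M[C]_(n', n)) (B : 'I_m -> 'I_m -> 'M[C]_n').

Let K := #|{: 'I_m * 'I_m'}|.
Let blk (x : 'I_K) : 'I_m := (enum_val x).1.
Let kraus (x : 'I_K) : 'I_m' := (enum_val x).2.

Definition pullback_blocks (x y : 'I_K) : 'M[C]_n :=
  adjmx (E (kraus x)) *m B (blk x) (blk y) *m E (kraus y).

Lemma pullback_blocks_diag_sum :
  \sum_(x < K) pullback_blocks x x
  = \sum_(j < m') adjmx (E j) *m (\sum_(i < m) B i i) *m E j.
Proof.
rewrite /pullback_blocks /blk /kraus.
rewrite -(big_enum_val (fun t : 'I_m * 'I_m' => adjmx (E t.2) *m B t.1 t.1 *m E t.2)).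
rewrite -(pair_bigA _ (fun i j => adjmx (E j) *m B i i *m E j)) /= exchange_big /=.
by apply: eq_bigr => j _; rewrite -mulmx_suml -mulmx_sumr.
Qed.

Lemma rank_pullback_blocks :
  (\rank (\mxblock_(x < K, y < K) pullback_blocks x y)
     <= \rank (\mxblock_(i < m, j < m) B i j))%N.
Proof. exact: rank_mxblock_sandwich. Qed.

End Pullback.

Lemma haemers_feasible_pullback {n n'} {S : {vspace 'M[C]_n}} {T : {vspace 'M[C]_n'}} {k} :
  nc_le S T -> haemers_feasible T k ->
  exists2 k', (k' <= k)%N & haemers_feasible S k'.
Proof.
move=> [m' [E [sumE EST]]] [m [B [BT [sumB <-]]]].
apply: (@ex_intro2 _ (fun k => k <= _)%N _ _ (rank_pullback_blocks E B)).
exists _, (pullback_blocks E B); split; first by move=> x y; apply/EST/BT.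
split=> //; rewrite pullback_blocks_diag_sum sumB -sumE.
by apply: eq_bigr => j _; rewrite mulmx1.
Qed.

End HaemersBound.

Theorem mainTheorem7 (R : realType) (n n' : nat)
    (S : {vspace 'M[R[i]]_n}) (T : {vspace 'M[R[i]]_n'}) :
  ncgraph S -> ncgraph T -> nc_le S T -> (haemers S <= haemers T)%N.
Proof.
move=> _ [T1 _] leST.
have [k le_k_hT feas_k] := haemers_feasible_pullback leST (haemers_feasible_haemers T1).
exact: leq_trans (haemers_min feas_k) le_k_hT.
Qed.
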